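(* Let $X$ be a geodesic metric space and $f:X\to\mathbb R$. Then $f$ is glacially oscillating if and only if for each $\epsilon>0$ there is a bounded subset $K$ of $X$ such that for every connected component $C$ of $X\setminus K$ the diameter of $f(C)$ is at most $\epsilon$.
   Context: A glacial scale on a metric space $X$ is a sequence $\mathcal S=\{(K_i,n_i)\}_{i\ge1}$ of pairs, each $K_i$ a bounded subset of $X$ and $n_i$ a natural number, such that for every bounded $K\subset X$ and every $r>0$ there is $i$ with $K\subset K_i$ and $n_i>r$. An $\mathcal S$-chain is a finite sequence $x_1,\dots,x_n$ in $X$ such that for each $i\le n-1$ there is $m\ge1$ with $x_i,x_{i+1}\notin K_m$ and $d(x_i,x_{i+1})\le n_m$. A function $f:X\to\mathbb R$ is glacially oscillating if for every $\epsilon>0$ there is a glacial scale $\mathcal S$ such that $|f(x_1)-f(x_n)|<\epsilon$ for every $\mathcal S$-chain $x_1,\dots,x_n$. *)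

From Stdlib Require Import Reals.
Open Scope R_scope.

Definition is_metric {X : Type} (d : X -> X -> R) : Prop :=
  (forall x y, 0 <= d x y) /\
  (forall x y, d x y = 0 <-> x = y) /\
  (forall x y, d x y = d y x) /\
  (forall x y z, d x z <= d x y + d y z).

Definition geodesic {X : Type} (d : X -> X -> R) : Prop :=
  forall x y : X, exists g : R -> X,
    g 0 = x /\ g (d x y) = y /\
    (forall s t, 0 <= s <= d x y -> 0 <= t <= d x y ->
       d (g s) (g t) = Rabs (s - t)).

Definition mbounded {X : Type} (d : X -> X -> R) (K : X -> Prop) : Prop :=
  exists (x0 : X) (r : R), forall x, K x -> d x0 x <= r.

Definition mopen {X : Type} (d : X -> X -> R) (U : X -> Prop) : Prop :=
  forall x, U x -> exists r, 0 < r /\ forall y, d x y < r -> U y.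

Definition mconnected {X : Type} (d : X -> X -> R) (A : X -> Prop) : Prop :=
  ~ exists U V : X -> Prop,
      mopen d U /\ mopen d V /\
      (forall x, A x -> U x \/ V x) /\
      (exists x, A x /\ U x) /\ (exists x, A x /\ V x) /\
      (forall x, A x -> U x -> V x -> False).

Definition component {X : Type} (d : X -> X -> R) (A : X -> Prop) (x : X)
  : X -> Prop :=
  fun y => exists B : X -> Prop,
    mconnected d B /\ (forall z, B z -> A z) /\ B x /\ B y.

Definition is_component {X : Type} (d : X -> X -> R) (A C : X -> Prop) : Prop :=
  exists x, A x /\ forall y, C y <-> component d A x y.

Definition diam_image_le {X : Type} (f : X -> R) (C : X -> Prop) (eps : R)
  : Prop :=
  forall a b, C a -> C b -> Rabs (f a - f b) <= eps.

Definition glacial_scale {X : Type} (d : X -> X -> R)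
  (K : nat -> X -> Prop) (n : nat -> nat) : Prop :=
  (forall i, mbounded d (K i)) /\
  (forall (B : X -> Prop) (r : R), mbounded d B -> 0 < r ->
     exists i, (forall x, B x -> K i x) /\ r < INR (n i)).

Definition S_chain {X : Type} (d : X -> X -> R)
  (K : nat -> X -> Prop) (n : nat -> nat) (x : nat -> X) (N : nat) : Prop :=
  forall i, (i < N)%nat -> exists m,
    ~ K m (x i) /\ ~ K m (x (S i)) /\ d (x i) (x (S i)) <= INR (n m).

Definition glacially_oscillating {X : Type} (d : X -> X -> R) (f : X -> R)
  : Prop :=
  forall eps, 0 < eps -> exists (K : nat -> X -> Prop) (n : nat -> nat),
    glacial_scale d K n /\
    forall (x : nat -> X) (N : nat), S_chain d K n x N ->
      Rabs (f (x 0%nat) - f (x N)) < eps.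

(* Both directions rest on comparing S-chains with connectedness.
   - Connected sets are chain-connected at every positive scale r: the points
     reachable from p by r-steps inside B form a clopen part of B
     ([connected_chain]).  Hence, taking K := K_i with n_i > 1, two points of
     one component of X \ K_i are joined by an S-chain avoiding K_i.
   - Conversely, given K inside a ball B(x0, rho), the closed balls of radius
     rho + i with n_i = i form a glacial scale.  A step of an S-chain avoiding
     the ball of radius rho + m and of length <= m is covered by a geodesic
     segment avoiding K; segments are connected (by the intermediate value
     theorem), so the whole chain stays in one component of X \ K. *)
From Stdlib Require Import Reals.
From Stdlib Require Import Lra Lia Classical ClassicalEpsilon.
Open Scope R_scope.

Section MetricSpace.
Context {X : Type} (d : X -> X -> R) (Hd : is_metric d).

Lemma dist_self x : d x x = 0.
Proof. destruct Hd as [_ [H _]]. apply H; reflexivity. Qed.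

Lemma dist_sym x y : d x y = d y x.
Proof. destruct Hd as [_ [_ [H _]]]. apply H. Qed.

Lemma dist_triangle x y z : d x z <= d x y + d y z.
Proof. destruct Hd as [_ [_ [_ H]]]. apply H. Qed.

Lemma dist_nonneg x y : 0 <= d x y.
Proof. destruct Hd as [H _]. apply H. Qed.

Definition cball (x0 : X) (r : R) : X -> Prop := fun y => d x0 y <= r.

Lemma separation_restrict (A U V : X -> Prop) :
  mopen d U -> mopen d V ->
  (forall x, A x -> U x \/ V x) -> (forall x, A x -> U x -> V x -> False) ->
  forall B : X -> Prop, (forall x, B x -> A x) ->
  (exists x, B x /\ U x) -> (exists x, B x /\ V x) ->
  ~ mconnected d B.
Proof.
  intros oU oV cov dis B BA BU BV HB. apply HB.
  exists U, V. refine (conj oU (conj oV (conj _ (conj BU (conj BV _))))).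
  - intros x Bx; apply cov, BA, Bx.
  - intros x Bx; apply dis, BA, Bx.
Qed.

Lemma connected_singleton c : mconnected d (fun x => x = c).
Proof.
  intros [U [V [_ [_ [_ [[a [-> Ua]] [[b [-> Vb]] dis]]]]]]].
  exact (dis c eq_refl Ua Vb).
Qed.

Lemma connected_union B1 B2 c :
  mconnected d B1 -> mconnected d B2 -> B1 c -> B2 c ->
  mconnected d (fun x => B1 x \/ B2 x).
Proof.
  intros H1 H2 c1 c2 [U [V [oU [oV [cov [[a [Ha Ua]] [[b [Hb Vb]] dis]]]]]]].
  pose proof (separation_restrict (fun x => B1 x \/ B2 x) U V oU oV cov dis)
    as sep.
  assert (in1 : forall x, B1 x -> B1 x \/ B2 x) by tauto.
  assert (in2 : forall x, B2 x -> B1 x \/ B2 x) by tauto.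
  destruct (cov c (or_introl c1)) as [Uc | Vc].
  - destruct Hb as [Hb | Hb]; [apply (sep B1) in H1 | apply (sep B2) in H2];
      eauto.
  - destruct Ha as [Ha | Ha]; [apply (sep B1) in H1 | apply (sep B2) in H2];
      eauto.
Qed.

Definition segment (g : R -> X) (L : R) : X -> Prop :=
  fun y => exists t, 0 <= t <= L /\ g t = y.

Definition clamp (L t : R) : R := Rmin L (Rmax 0 t).

Lemma clamp_in L t : 0 <= L -> 0 <= clamp L t <= L.
Proof. intros; unfold clamp, Rmin, Rmax; repeat destruct Rle_dec; lra. Qed.

Lemma clamp_id L t : 0 <= t <= L -> clamp L t = t.
Proof. intros; unfold clamp, Rmin, Rmax; repeat destruct Rle_dec; lra. Qed.

Lemma clamp_lipschitz L a b : 0 <= L ->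
  Rabs (clamp L a - clamp L b) <= Rabs (a - b).
Proof.
  intros; unfold clamp, Rmin, Rmax, Rabs; repeat destruct Rle_dec;
  repeat destruct Rcase_abs; lra.
Qed.

Section Segment.
Variables (g : R -> X) (L : R).
Hypothesis L_nonneg : 0 <= L.
Hypothesis g_isometric : forall s t, 0 <= s <= L -> 0 <= t <= L ->
  d (g s) (g t) = Rabs (s - t).

Lemma segment_clamp t : segment g L (g (clamp L t)).
Proof. exists (clamp L t); split; auto using clamp_in. Qed.

Lemma clamp_path_open (U : X -> Prop) t : mopen d U -> U (g (clamp L t)) ->
  exists r, 0 < r /\ forall t', Rabs (t' - t) < r -> U (g (clamp L t')).
Proof.
  intros oU Ut. destruct (oU _ Ut) as [r [Hr ball]].
  exists r; split; auto. intros t' Ht'. apply ball.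
  rewrite g_isometric by auto using clamp_in.
  eapply Rle_lt_trans; [apply clamp_lipschitz; auto|].
  rewrite Rabs_minus_sym; exact Ht'.
Qed.

(* A separation of the segment would yield a continuous function R -> R
   with values in {1, -1} taking both values, contradicting the IVT. *)
Lemma segment_connected : mconnected d (segment g L).
Proof.
  intros [U [V [oU [oV [cov
    [[y1 [[a [Ha <-]] Ua]] [[y2 [[b [Hb <-]] Vb]] dis]]]]]]].
  set (h := fun t =>
    if excluded_middle_informative (U (g (clamp L t))) then 1 else -1).
  assert (side : forall t t', U (g (clamp L t)) <-> U (g (clamp L t')) ->
                 h t = h t').
  { intros t t' E; unfold h.
    repeat destruct excluded_middle_informative; tauto. }
  assert (locally_constant : forall t, exists r, 0 < r /\
            forall t', Rabs (t' - t) < r -> h t' = h t).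
  { intro t. destruct (cov _ (segment_clamp t)) as [Ut | Vt].
    - destruct (clamp_path_open U t oU Ut) as [r [Hr near]].
      exists r; split; auto. intros t' Ht'. apply side; split; auto.
    - destruct (clamp_path_open V t oV Vt) as [r [Hr near]].
      exists r; split; auto. intros t' Ht'. apply side; split; intro Hu;
        exfalso; [apply (dis _ (segment_clamp t') Hu (near t' Ht'))
                 |apply (dis _ (segment_clamp t) Hu Vt)]. }
  assert (cont : continuity h).
  { intros t eps Heps. destruct (locally_constant t) as [r [Hr near]].
    exists r; split; auto. intros t' [_ Ht']; simpl in *; unfold R_dist in *.
    rewrite near, Rminus_diag, Rabs_R0 by exact Ht'; exact Heps. }
  assert (ha : h a = 1).
  { unfold h; rewrite clamp_id by auto.
    destruct excluded_middle_informative; tauto. }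
  assert (hb : h b = -1).
  { unfold h; rewrite clamp_id by auto.
    destruct excluded_middle_informative as [Ub|]; auto.
    exfalso; eapply dis; [exists b; split; eauto | exact Ub | exact Vb]. }
  assert (zero : exists z, h z = 0).
  { destruct (Rle_dec a b) as [ab|ab].
    - destruct (IVT_cor h a b cont ab) as [z [_ Hz]];
        [rewrite ha, hb; lra | eauto].
    - destruct (IVT_cor h b a cont) as [z [_ Hz]];
        [lra | rewrite ha, hb; lra | eauto]. }
  destruct zero as [z Hz]. unfold h in Hz.
  destruct excluded_middle_informative; lra.
Qed.

End Segment.

Definition reach (B : X -> Prop) (r : R) (p z : X) : Prop :=
  exists (x : nat -> X) (N : nat), x 0%nat = p /\ x N = z /\
    (forall i, (i <= N)%nat -> B (x i)) /\
    (forall i, (i < N)%nat -> d (x i) (x (S i)) < r).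

Lemma reach_refl B r p : B p -> reach B r p p.
Proof.
  intros Bp. exists (fun _ => p), 0%nat; repeat split; auto. intros; lia.
Qed.

Lemma reach_step B r p z y :
  reach B r p z -> B y -> d z y < r -> reach B r p y.
Proof.
  intros [x [N [H0 [HN [HB Hs]]]]] By Hzy.
  exists (fun i => if (i <=? N)%nat then x i else y), (S N).
  repeat split.
  - exact H0.
  - replace (S N <=? N)%nat with false by (symmetry; apply Nat.leb_gt; lia).
    reflexivity.
  - intros i Hi. destruct (Nat.leb_spec i N); auto.
  - intros i Hi.
    replace (i <=? N)%nat with true by (symmetry; apply Nat.leb_le; lia).
    destruct (Nat.leb_spec (S i) N); [apply Hs; lia|].
    replace i with N by lia. rewrite HN; exact Hzy.
Qed.

(* The r-neighbourhoods of the reachable and of the unreachable points of B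
   are open, cover B and are disjoint on B; so by connectedness every point
   of B is reachable. *)
Lemma connected_chain B r p q : 0 < r ->
  mconnected d B -> B p -> B q -> reach B r p q.
Proof.
  intros Hr HB Bp Bq. apply NNPP; intro Hq. apply HB.
  exists (fun y => exists z, reach B r p z /\ d z y < r),
         (fun y => exists w, B w /\ ~ reach B r p w /\ d w y < r).
  repeat split.
  - intros y [z [Hz Hzy]]. exists (r - d z y). split; [lra|].
    intros y' Hy'. exists z; split; auto.
    pose proof (dist_triangle z y y'); lra.
  - intros y [z [Hz Hzy]]. exists (r - d z y). split; [lra|].
    intros y' Hy'. exists z; repeat split; try tauto.
    pose proof (dist_triangle z y y'); lra.
  - intros y By. rewrite <- (dist_self y) in Hr.
    destruct (classic (reach B r p y)); [left | right]; exists y; auto.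
  - exists p; split; auto. exists p; rewrite dist_self; auto using reach_refl.
  - exists q; split; auto. exists q; rewrite dist_self; auto.
  - intros y By [z [Hz Hzy]] [w [Bw [Hw Hwy]]].
    apply Hw, (reach_step B r p y w); eauto using reach_step.
    rewrite dist_sym; exact Hwy.
Qed.

Lemma component_pair A x a b :
  component d A x a -> component d A x b ->
  exists B, mconnected d B /\ (forall z, B z -> A z) /\ B a /\ B b.
Proof.
  intros [Ba [Ca [BaA [Bax Baa]]]] [Bb [Cb [BbA [Bbx Bbb]]]].
  exists (fun y => Ba y \/ Bb y). repeat split.
  - exact (connected_union Ba Bb x Ca Cb Bax Bbx).
  - intros z [|]; auto.
  - left; exact Baa.
  - right; exact Bbb.
Qed.

(* First direction: for a scale witnessing eps, K := K_i with n_i > 1 works,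
   since two points of a component are joined by a 1-chain avoiding K_i. *)
Lemma glacial_small_on_components f :
  glacially_oscillating d f ->
  forall eps, 0 < eps -> exists K : X -> Prop, mbounded d K /\
    forall C, is_component d (fun x => ~ K x) C -> diam_image_le f C eps.
Proof.
  intros Hgo eps Heps.
  destruct (Hgo eps Heps) as [K [n [[Kb Kcov] small]]].
  destruct (Kcov (K 0%nat) 1 (Kb 0%nat) Rlt_0_1) as [i0 [_ n_gt1]].
  exists (K i0). split; [apply Kb|].
  intros C [x [_ HC]] a b Ca Cb. apply HC in Ca, Cb.
  destruct (component_pair _ x a b Ca Cb) as [B [BC [BA [Ba Bb]]]].
  destruct (connected_chain B 1 a b Rlt_0_1 BC Ba Bb)
    as [xs [N [<- [<- [inB steps]]]]].
  (* xs is an S-chain using the single pair (K i0, n i0) for every step. *)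
  apply Rlt_le, small. intros i Hi. exists i0. repeat split.
  - apply BA, inB; lia.
  - apply BA, inB; lia.
  - specialize (steps i Hi); lra.
Qed.

Lemma ball_glacial_scale x0 rho :
  glacial_scale d (fun i => cball x0 (rho + INR i)) (fun i => i).
Proof.
  split.
  - intro i. exists x0, (rho + INR i); auto.
  - intros B r [y0 [r0 Hb]] Hr.
    destruct (INR_unbounded (Rmax r (d x0 y0 + r0 - rho))) as [i Hi].
    pose proof (Rmax_l r (d x0 y0 + r0 - rho)).
    pose proof (Rmax_r r (d x0 y0 + r0 - rho)).
    exists i. split; [|lra].
    intros x Bx. unfold cball.
    pose proof (dist_triangle x0 y0 x). pose proof (Hb x Bx). lra.
Qed.

Lemma segment_avoids_ball x0 rho m (g : R -> X) (y : X) L :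
  0 <= L -> L <= m -> g 0 = y ->
  (forall s t, 0 <= s <= L -> 0 <= t <= L -> d (g s) (g t) = Rabs (s - t)) ->
  ~ cball x0 (rho + m) y ->
  forall z, segment g L z -> ~ cball x0 rho z.
Proof.
  unfold cball. intros HL HLm g0 iso Hy z [t [Ht <-]] Hz.
  pose proof (dist_triangle x0 (g t) y).
  assert (d (g t) y = t).
  { rewrite <- g0, iso by lra. rewrite Rminus_0_r, Rabs_pos_eq; lra. }
  lra.
Qed.

Section ChainInComponent.
Hypothesis Hgeo : geodesic d.
Variables (K : X -> Prop) (x0 : X) (rho : R).
Hypothesis K_in_ball : forall y, K y -> cball x0 rho y.

(* Every point of a nontrivial S-chain for the ball scale lies in the
   component of X \ K containing its starting point: each step is covered by
   a geodesic segment avoiding K. *)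
Lemma chain_in_component (x : nat -> X) (N : nat) : (0 < N)%nat ->
  S_chain d (fun i => cball x0 (rho + INR i)) (fun i => i) x N ->
  forall j, (j <= N)%nat -> component d (fun y => ~ K y) (x 0%nat) (x j).
Proof.
  intros N_pos chain j. induction j as [|j IH]; intro Hj.
  - destruct (chain 0%nat N_pos) as [m [out0 _]].
    exists (fun y => y = x 0%nat).
    repeat split; auto using connected_singleton.
    intros z -> Kz. apply out0. specialize (K_in_ball _ Kz).
    pose proof (pos_INR m). unfold cball in *; lra.
  - destruct (IH ltac:(lia)) as [B [BC [BA [B0 Bj]]]].
    destruct (chain j ltac:(lia)) as [m [outj [_ step]]].
    destruct (Hgeo (x j) (x (S j))) as [g [g0 [gL iso]]].
    pose proof (dist_nonneg (x j) (x (S j))) as L_nonneg.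
    pose proof (segment_avoids_ball x0 rho (INR m) g (x j) _
                  L_nonneg step g0 iso outj) as avoid.
    exists (fun y => B y \/ segment g (d (x j) (x (S j))) y). repeat split.
    + apply (connected_union _ _ (x j)); auto using segment_connected.
      exists 0; split; [lra | exact g0].
    + intros z [Bz | Sz]; [exact (BA z Bz) |].
      intro Kz; exact (avoid z Sz (K_in_ball z Kz)).
    + left; exact B0.
    + right. exists (d (x j) (x (S j))); split; [lra | exact gL].
Qed.

End ChainInComponent.

(* Second direction: for K inside B(x0, rho) given by eps/2, the ball scale
   works, since every S-chain stays in one component of X \ K. *)
Lemma small_on_components_glacial f : geodesic d ->
  (forall eps, 0 < eps -> exists K : X -> Prop, mbounded d K /\
    forall C, is_component d (fun x => ~ K x) C -> diam_image_le f C eps) ->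
  glacially_oscillating d f.
Proof.
  intros Hgeo small eps Heps.
  destruct (small (eps / 2)) as [K [[x0 [rho K_in_ball]] HK]]; [lra|].
  exists (fun i => cball x0 (rho + INR i)), (fun i => i).
  split; [apply ball_glacial_scale|].
  intros x [|N] chain.
  - rewrite Rminus_diag, Rabs_R0; exact Heps.
  - pose proof (chain_in_component Hgeo K x0 rho K_in_ball x (S N)
                  ltac:(lia) chain) as in_comp.
    assert (comp : is_component d (fun y => ~ K y)
                     (component d (fun y => ~ K y) (x 0%nat))).
    { exists (x 0%nat); split; [|tauto].
      destruct (in_comp 0%nat ltac:(lia)) as [B [_ [BA [B0 _]]]]; auto. }
    pose proof (HK _ comp _ _ (in_comp 0%nat ltac:(lia))
                  (in_comp (S N) (le_n _))).
    lra.
Qed.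

End MetricSpace.

Theorem proposition3p14 (X : Type) (d : X -> X -> R) (f : X -> R)
  (Hd : is_metric d) (Hgeo : geodesic d) :
  glacially_oscillating d f <->
  (forall eps, 0 < eps -> exists (K : X -> Prop), mbounded d K /\
     forall C : X -> Prop, @is_component X d (fun x : X => ~ K x) C ->
       diam_image_le f C eps).
Proof.
  split.
  - exact (glacial_small_on_components d Hd f).
  - exact (small_on_components_glacial d Hd f Hgeo).
Qed.
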